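(* In the setting below, fix $x_0\in\mathcal{X}$ and suppose $P(\limsup_{n\to\infty}f(X_n)=\infty\mid x_0)=1$. Let $H\subseteq\mathcal{X}^\infty$ be the set of paths $w$ for which $Y_n(w)$ converges to a finite limit, and suppose $P(H\mid x_0)=1$. Then $C$ is $P(\cdot\mid x_0)$-recurrent.
   Context: $\mathcal{X}$ is a Polish space with Borel $\sigma$-algebra $\mathcal{B}$; $X=(X_0,X_1,\dots)$ is a Markov chain on $\mathcal{X}$ with transition kernel $T(\cdot\mid y)$; $P(\cdot\mid x_0)$ is the law on $\mathcal{X}^\infty$ of the chain started at $X_0=x_0$. $C\in\mathcal{B}$; $\tau_C$ is the smallest $n\ge1$ with $X_n\in C$ ($\tau_C=\infty$ if there is none); $E_C=\{\tau_C<\infty\}$. $C$ is $P(\cdot\mid x_0)$-recurrent if $P(E_C\mid x_0)=1$. $f:\mathcal{X}\to[0,\infty)$ is Borel measurable and $Y_n=f(X_{\tau_C\wedge n})$, $n=0,1,2,\dots$. *)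

From HB Require Import structures.
From mathcomp Require Import all_boot all_order all_algebra.
From mathcomp Require Import all_classical all_reals all_analysis.
Set Implicit Arguments. Unset Strict Implicit. Unset Printing Implicit Defensive.
Import Order.TTheory GRing.Theory Num.Theory.
Import numFieldNormedType.Exports.
Local Open Scope classical_set_scope.
Local Open Scope ring_scope.

Section Polish.
Context {R : realType} {T : Type}.

Definition is_metric (dist : T -> T -> R) : Prop :=
  [/\ (forall x y, 0 <= dist x y),
      (forall x y, dist x y = 0 <-> x = y),
      (forall x y, dist x y = dist y x) &
      (forall x y z, dist x z <= dist x y + dist y z)].

Definition metric_open (dist : T -> T -> R) : set (set T) :=
  [set U | forall x, U x -> exists e : R, 0 < e /\ [set y | dist x y < e] `<=` U].

Definition metric_complete (dist : T -> T -> R) : Prop :=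
  forall u : nat -> T,
    (forall e : R, 0 < e -> exists N, forall m n, (N <= m)%N -> (N <= n)%N ->
        dist (u m) (u n) < e) ->
    exists l, forall e : R, 0 < e -> exists N, forall n, (N <= n)%N -> dist (u n) l < e.

Definition metric_separable (dist : T -> T -> R) : Prop :=
  exists D : set T, countable D /\
    forall x (e : R), 0 < e -> exists y, D y /\ dist x y < e.
End Polish.

Definition polish_borel (R : realType) (d : measure_display) (T : measurableType d) : Prop :=
  exists dist : T -> T -> R,
    [/\ is_metric dist, metric_complete dist, metric_separable dist &
        forall A : set T, measurable A <-> <<s metric_open dist >> A].

Fixpoint fdd_kernel (R : realType) (d : measure_display) (T : measurableType d)
  (k : R.-ker T ~> T) (As : seq (set T)) (x : T) : \bar R :=
  match As with
  | [::] => 1%E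
  | A :: As' => (\int[k x]_(y in A) fdd_kernel k As' y)%E
  end.

(* This determines the law of (X_n) on the path space: it is P(. | x0). *)
Definition markov_chain_from (R : realType) (d : measure_display) (T : measurableType d)
  (dO : measure_display) (Omega : measurableType dO) (P : probability Omega R)
  (k : R.-ker T ~> T) (x0 : T) (X : nat -> Omega -> T) : Prop :=
  [/\ (forall n, measurable_fun setT (X n)),
      P [set w | X 0%N w = x0] = 1%E &
      forall As : seq (set T), (forall A, A \in As -> measurable A) ->
        P [set w | forall i, (i < size As)%N -> nth setT As i (X i.+1 w)]
        = fdd_kernel k As x0].

Definition hit_pred (d : measure_display) (T : measurableType d) (Omega : Type)
  (X : nat -> Omega -> T) (C : set T) (w : Omega) : pred nat :=
  fun n => (0 < n)%N && (X n w \in C).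

(* tau_C w = Some n, n the least n >= 1 with X_n(w) in C; None encodes infinity *)
Definition tauC (d : measure_display) (T : measurableType d) (Omega : Type)
  (X : nat -> Omega -> T) (C : set T) (w : Omega) : option nat :=
  match pselect (exists n, hit_pred X C w n) with
  | left h => Some (ex_minn h)
  | right _ => None
  end.

Definition tauC_min (d : measure_display) (T : measurableType d) (Omega : Type)
  (X : nat -> Omega -> T) (C : set T) (n : nat) (w : Omega) : nat :=
  match tauC X C w with Some t => minn t n | None => n end.

Definition Yproc (R : realType) (d : measure_display) (T : measurableType d) (Omega : Type)
  (X : nat -> Omega -> T) (C : set T) (f : T -> R) (n : nat) (w : Omega) : R :=
  f (X (tauC_min X C n w) w).

Definition E_C (d : measure_display) (T : measurableType d) (Omega : Type)
  (X : nat -> Omega -> T) (C : set T) : set Omega :=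
  [set w | tauC X C w <> None].

From HB Require Import structures.
From mathcomp Require Import all_boot all_order all_algebra.
From mathcomp Require Import all_classical all_reals all_analysis.
From mathcomp Require Import measurable_realfun zify ring.
Import Order.TTheory GRing.Theory Num.Theory.
Import numFieldNormedType.Exports.
Local Open Scope classical_set_scope.
Local Open Scope ring_scope.

(* If the chain never enters C, the stopped process Y_n is just f(X_n); on
   the event where Y_n converges to a finite limit, f(X_n) then converges and
   its limsup is finite.  So the two almost sure events together force
   tau_C < oo, and what remains is to check that every event involved is
   measurable. *)

Lemma cvgn_cauchyP {R : realType} (u : R^nat) : cvgn u <->
  forall k : nat, exists N, forall n, (N <= n)%N -> `|u N - u n| < k.+1%:R^-1.
Proof.
split.
  move=> /cauchy_cvgP /cauchyP cu k.
  have e0 : 0 < k.+1%:R^-1 / 2 :> R by rewrite divr_gt0 // invr_gt0 ltr0n.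
  have [x [N _ xu]] := cu _ e0.
  exists N => n Nn.
  have := xu _ (leqnn N); have := xu _ Nn; rewrite -!ball_normE /ball_ /= => xun xuN.
  rewrite (_ : u N - u n = - (x - u N) + (x - u n)); last by ring.
  apply: (le_lt_trans (ler_normD _ _)); rewrite normrN.
  by rewrite [X in _ < X](splitr (k.+1%:R^-1)); exact: ltrD.
move=> cauchy_u; apply/cauchy_cvgP/cauchy_exP => e e0.
have [k ke] := ltr_add_invr e0; rewrite add0r in ke.
have [N uN] := cauchy_u k; exists (u N); exists N => // n /= Nn.
by rewrite -ball_normE /ball_ /=; exact: lt_trans (uN n Nn) ke.
Qed.

Lemma cvgn_limn_esup_EFin {R : realType} (u : R^nat) :
  cvgn u -> limn_esup (EFin \o u) = (limn u)%:E.
Proof.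
move=> cu; rewrite -EFin_lim // is_cvg_limn_esupE //.
move/cvg_ex: cu => [l ul]; apply/cvg_ex; exists l%:E.
exact: (cvg_comp _ _ ul).
Qed.

Lemma measurable_cvgn {R : realType} {d : measure_display} {T : measurableType d}
  (u : (T -> R)^nat) : (forall n, measurable_fun setT (u n)) ->
  measurable [set w | cvgn (u ^~ w)].
Proof.
move=> mu.
have -> : [set w | cvgn (u ^~ w)] = \bigcap_(k in [set: nat]) \bigcup_(N in [set: nat])
    \bigcap_(n in [set n | (N <= n)%N])
      ((fun w => `|u N w - u n w|) @^-1` `]-oo, k.+1%:R^-1[).
  apply/seteqP; split => w /=.
    move/cvgn_cauchyP => cauchy_u k _; have [N uN] := cauchy_u k.
    by exists N => // n /= Nn; rewrite in_itv /=; exact: uN.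
  move=> cauchy_u; apply/cvgn_cauchyP => k; have [N _ uN] := cauchy_u k I.
  by exists N => n Nn; have := uN n Nn; rewrite /= in_itv.
apply: bigcap_measurableType => k _; apply: bigcup_measurable => N _.
apply: bigcap_measurableType => n _.
rewrite -[X in measurable X]setTI.
by apply: (measurableT_comp (@normr_measurable R setT) (measurable_funB (mu N) (mu n))).
Qed.

Lemma measurable_limn_esup_eqy {R : realType} {d : measure_display}
  {T : measurableType d} (u : (T -> \bar R)^nat) :
  (forall n, measurable_fun setT (u n)) ->
  measurable [set w | limn_esup (u ^~ w) = +oo%E].
Proof.
move=> mu; have := measurable_fun_limn_esup mu measurableT (emeasurable_set1 +oo%E).
by rewrite setTI.
Qed.

Lemma probability_subset_eq1 {d : measure_display} {T : measurableType d}
  {R : realType} (P : probability T R) {A B E : set T} :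
  measurable A -> measurable B -> measurable E ->
  P A = 1%E -> P B = 1%E -> A `&` B `<=` E -> P E = 1%E.
Proof.
move=> mA mB mE PA PB ABE.
have PEC0 : P (~` E) = 0%E.
  apply/eqP; rewrite eq_le measure_ge0 andbT.
  apply: (le_trans (le_measure _ _ _ (subsetC ABE))).
  - by rewrite inE; exact: measurableC.
  - by rewrite inE; apply: measurableC; exact: measurableI.
  have PUle : (P (~` A `|` ~` B) <= P (~` A) + P (~` B))%E :=
    measureU2 P (measurableC mA) (measurableC mB).
  rewrite setCI; apply: le_trans PUle _.
  by rewrite (probability_setC P mA) (probability_setC P mB) PA PB subee // adde0.
by have := probability_setC P (measurableC mE); rewrite setCK PEC0 sube0.
Qed.

Section hitting_time.
Context {d : measure_display} {T : measurableType d} {Omega : Type}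
  {X : nat -> Omega -> T} {C : set T}.

Variant tauC_spec (w : Omega) : option nat -> Prop :=
| TauCSome t of hit_pred X C w t & (forall i, (i < t)%N -> ~~ hit_pred X C w i) :
    tauC_spec w (Some t)
| TauCNone of (forall i, ~~ hit_pred X C w i) : tauC_spec w None.

Lemma tauCP w : tauC_spec w (tauC X C w).
Proof.
rewrite /tauC; case: pselect => [h|nh].
  case: ex_minnP => t ht tmin; constructor => // i it.
  by apply/negP => /tmin; rewrite leqNgt it.
by constructor => i; apply/negP => hi; apply: nh; exists i.
Qed.

Lemma E_C_bigcup : E_C X C = \bigcup_i [set w | hit_pred X C w i].
Proof.
apply/seteqP; split => w; rewrite /E_C /=; case: tauCP.
- by move=> t ht _ _; exists t.
- by move=> _; exact.
- by [].
- by move=> nohit [i _ hi]; move: (nohit i); rewrite hi.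
Qed.

Lemma Yproc_notE_C {R : realType} (f : T -> R) w n :
  ~ E_C X C w -> Yproc X C f n w = f (X n w).
Proof.
rewrite /E_C /Yproc /tauC_min /=.
by case: tauC => // t hit; exfalso; exact: hit.
Qed.

Lemma E_C_of_cvgn_Yproc {R : realType} (f : T -> R) (w : Omega) :
  limn_esup (fun n => (f (X n w))%:E) = +oo%E ->
  cvgn (fun n => Yproc X C f n w) -> E_C X C w.
Proof.
move=> fXy; apply: contraPP => notE.
have -> : (fun n => Yproc X C f n w) = f \o X ^~ w.
  by apply/funext => n; exact: Yproc_notE_C.
by move/cvgn_limn_esup_EFin => /= fXfin; move: fXy; rewrite fXfin.
Qed.

(* [tauC_min X C m w = j] is described by finitely many hitting events. *)
Definition stopped_at (m : nat) (w : Omega) (j : nat) : Prop :=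
  [/\ (j <= m)%N, ((j < m)%N -> hit_pred X C w j) &
      (forall i, (i < j)%N -> ~~ hit_pred X C w i)].

Lemma stopped_at_uniq m w j j' : stopped_at m w j -> stopped_at m w j' -> j = j'.
Proof.
wlog jj' : j j' / (j <= j')%N => [wlog_jj'|].
  move=> sj sj'; have [jj'|/ltnW j'j] := leqP j j'; first exact: wlog_jj'.
  by symmetry; exact: wlog_jj'.
move=> [_ hj _] [j'm _ nohit]; apply/eqP; rewrite eqn_leq jj' leqNgt.
apply/negP => jj'lt; move: (nohit _ jj'lt); rewrite hj //.
exact: leq_trans jj'lt j'm.
Qed.

Lemma stopped_at_tauC_min m w : stopped_at m w (tauC_min X C m w).
Proof.
rewrite /tauC_min; case: tauCP => [t ht tmin|nohit].
  split=> [|tm|i]; first exact: geq_minr.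
  - by have -> : minn t m = t by lia.
  - by rewrite leq_min => /andP[/tmin].
by split=> [||i _]; rewrite ?ltnn.
Qed.

Lemma tauC_minP m w j : tauC_min X C m w = j <-> stopped_at m w j.
Proof.
split=> [<-|sj]; first exact: stopped_at_tauC_min.
exact: stopped_at_uniq (stopped_at_tauC_min m w) sj.
Qed.

End hitting_time.

Section measurability.
Context {R : realType} {d : measure_display} {T : measurableType d}
  {dO : measure_display} {Omega : measurableType dO}
  {X : nat -> Omega -> T} {C : set T} {f : T -> R}
  (mX : forall n, measurable_fun setT (X n)) (mC : measurable C)
  (mf : measurable_fun setT f).

Lemma measurable_hit i : measurable [set w | hit_pred X C w i].
Proof.
rewrite /hit_pred; case: (ltnP 0 i) => i0 /=.
  have -> : [set w | X i w \in C] = X i @^-1` C.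
    by apply/seteqP; split => w /=; rewrite inE.
  by rewrite -[X in measurable X]setTI; exact: mX.
have -> : [set w | false] = @set0 Omega by apply/seteqP; split.
exact: measurable0.
Qed.

Lemma measurable_E_C : measurable (E_C X C).
Proof. by rewrite E_C_bigcup; apply: bigcupT_measurable => i; exact: measurable_hit. Qed.

Lemma measurable_tauC_min_eq m j : measurable [set w | tauC_min X C m w = j].
Proof.
have -> : [set w | tauC_min X C m w = j] =
  (if (j <= m)%N then setT else set0) `&`
  (if (j < m)%N then [set w | hit_pred X C w j] else setT) `&`
  \bigcap_(i in [set i | (i < j)%N]) ~` [set w | hit_pred X C w i].
  apply/seteqP; split => w /=.
    move/tauC_minP => [jm hj nohit]; split; first split.
    - by rewrite jm.
    - by case: ifP => // jm'; exact: hj.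
    - by move=> i /= ij; apply/negP/nohit.
  move=> [[jm hj] nohit]; apply/tauC_minP; split.
  - by move: jm; case: ifP.
  - by move=> jlt; move: hj; rewrite jlt.
  - by move=> i ij; apply/negP; exact: nohit.
apply: measurableI; first apply: measurableI.
- by case: ifP => _; [exact: measurableT|exact: measurable0].
- by case: ifP => _; [exact: measurable_hit|exact: measurableT].
- by apply: bigcap_measurableType => i _; apply: measurableC; exact: measurable_hit.
Qed.

Lemma measurable_Yproc m : measurable_fun setT (Yproc X C f m).
Proof.
move=> _ S mS; rewrite setTI.
have -> : Yproc X C f m @^-1` S = \bigcup_j
    ([set w | tauC_min X C m w = j] `&` (f \o X j) @^-1` S).
  apply/seteqP; split => w /=; first by exists (tauC_min X C m w).
  by case=> j _ [/= <-].
apply: bigcupT_measurable => j; apply: measurableI.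
  exact: measurable_tauC_min_eq.
by rewrite -[X in measurable X]setTI; exact: (measurableT_comp mf (mX j)).
Qed.

End measurability.

Theorem theorem4p1 (R : realType) (d : measure_display) (T : measurableType d)
  (dO : measure_display) (Omega : measurableType dO) (P : probability Omega R)
  (k : R.-pker T ~> T) (x0 : T) (X : nat -> Omega -> T)
  (C : set T) (f : T -> R) :
  polish_borel R T ->
  markov_chain_from P k x0 X ->
  measurable C ->
  measurable_fun setT f -> (forall x, 0 <= f x) ->
  P [set w | limn_esup (fun n => (f (X n w))%:E) = +oo%E] = 1%E ->
  P [set w | cvgn (fun n => Yproc X C f n w)] = 1%E ->
  P (E_C X C) = 1%E.
Proof.
move=> _ [mX _ _] mC mf _ Plimsup PcvgY.
apply: (probability_subset_eq1 P _ _ (measurable_E_C mX mC) Plimsup PcvgY).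
- apply: measurable_limn_esup_eqy => n.
  by apply/measurable_EFinP; exact: measurableT_comp mf (mX n).
- by apply: measurable_cvgn => n; exact: measurable_Yproc.
- by move=> w [fXy cvgY]; exact: E_C_of_cvgn_Yproc fXy cvgY.
Qed.
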